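(* Let $P=\sum_{k=0}^nq^kP_k(D)\in\mathbb{C}[q][D]$ with $D=q\frac{d}{dq}$, and let $\widetilde P=\sum_{k=0}^nq^kP_k(D)(D+1)(D+2)\cdots(D+k)$. Fix $N\geq0$ and let $R=\mathbb{C}[\varepsilon]/(\varepsilon^{N+1})$. If $I=\sum_{i,j}a_{ij}q^i\varepsilon^j\in\mathbb{C}[[q]]\otimes R$ is a perturbed solution of $P$, then $$\widetilde I=\sum_{i,j}a_{ij}q^i\varepsilon^j(\varepsilon+1)(\varepsilon+2)\cdots(\varepsilon+i)$$ is a perturbed solution of $\widetilde P$.
   Context: Write a series $J\in\mathbb{C}[[q]]\otimes R$ as $J=\sum_{j=0}^NJ^j(q)\varepsilon^j$ and put $J_r=\sum_{m=0}^rJ^{r-m}(q)\,t^m/m!\in\mathbb{C}[[q]][t]$. Operators act on $\mathbb{C}[[q]][t]$ via $D(f(q)t^m)=qf'(q)t^m+mf(q)t^{m-1}$, with $q$ acting by multiplication. $J$ is a perturbed solution of an operator $Q$ if $QJ_r=0$ for all $0\leq r\leq N$. *)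

From HB Require Import structures.
From mathcomp Require Import all_boot all_order all_algebra.
Set Implicit Arguments. Unset Strict Implicit. Unset Printing Implicit Defensive.
Import Order.TTheory GRing.Theory Num.Theory.
Local Open Scope ring_scope.

Section PerturbedSolutions.
Variable F : fieldType.

(* An element of F[[q]][t] (or F[[q]] (x) R) is encoded by its coefficient
   array: g i m = coefficient of q^i t^m (resp. q^i eps^m). *)
Definition ser := nat -> nat -> F.

(* D (f(q) t^m) = q f'(q) t^m + m f(q) t^(m-1), on coefficients. *)
Definition Dop (g : ser) : ser :=
  fun i m => i%:R * g i m + m.+1%:R * g i m.+1.

Definition qmul (k : nat) (g : ser) : ser :=
  fun i m => if (k <= i)%N then g (i - k)%N m else 0.

Definition polyD (p : {poly F}) (g : ser) : ser :=
  fun i m => \sum_(l < size p) p`_l * iter l Dop g i m.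

Definition applyOp (n : nat) (P : nat -> {poly F}) (g : ser) : ser :=
  fun i m => \sum_(k < n.+1) qmul k (polyD (P k) g) i m.

Definition Ptilde (P : nat -> {poly F}) (k : nat) : {poly F} :=
  P k * \prod_(1 <= l < k.+1) ('X + (l%:R)%:P).

Definition Jr (J : ser) (r : nat) : ser :=
  fun i m => if (m <= r)%N then J i (r - m)%N / (m`!)%:R else 0.

Definition perturbed_sol (N n : nat) (P : nat -> {poly F}) (J : ser) : Prop :=
  forall r, (r <= N)%N -> forall i m, applyOp n P (Jr J r) i m = 0.

Definition Itilde (N : nat) (a : ser) : ser :=
  fun i j => if (j <= N)%N then
    ((\sum_(j' < N.+1) a i j' *: 'X^j') * \prod_(1 <= l < i.+1) ('X + (l%:R)%:P))`_j
  else 0.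

End PerturbedSolutions.

From HB Require Import structures.
From mathcomp Require Import all_boot all_order all_algebra.
From mathcomp Require Import ring.
Set Implicit Arguments.
Unset Strict Implicit.
Import GRing.Theory.
Local Open Scope ring_scope.

(* Encode a series J modulo eps^(N+1) by polynomials t i in eps, with
   J i j = (t i)_j for j <= N.  On the q^i-part of J_r, D acts as
   multiplication of t i by (eps + i), so sum_k q^k P_k(D) J_r is read off
   the eps-polynomials sum_k t (i - k) * P_k(eps + i - k); J is a perturbed
   solution iff these vanish modulo eps^(N+1).  Replacing t i by
   t i * (eps+1)...(eps+i) and P_k by P_k (D+1)...(D+k) multiplies the i-th
   such polynomial by (eps+1)...(eps+i), since
   (eps+1)...(eps+i-k) * (eps+i-k+1)...(eps+i) = (eps+1)...(eps+i). *)

Lemma coef_mul_eq0 (R : nzSemiRingType) (p q : {poly R}) (N : nat) :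
  (forall j, (j <= N)%N -> q`_j = 0) -> forall j, (j <= N)%N -> (p * q)`_j = 0.
Proof.
move=> q0 j le_jN; rewrite coefM big1 // => k _.
by rewrite q0 ?mulr0 // (leq_trans (leq_subr _ _) le_jN).
Qed.

Section PerturbedSolutions.
Variable F : fieldType.

Definition risingX (k : nat) : {poly F} := \prod_(1 <= l < k.+1) ('X + l%:R%:P).

Lemma risingX_comp_shift (k c : nat) :
  risingX k \Po ('X + c%:R%:P) = \prod_(1 <= l < k.+1) ('X + (c + l)%:R%:P).
Proof.
elim: k => [|k IH]; first by rewrite /risingX !big_geq // comp_polyC.
rewrite /risingX big_nat_recr // comp_polyM IH [in RHS]big_nat_recr //=.
by rewrite comp_polyD comp_polyX comp_polyC -addrA -polyCD -natrD.
Qed.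

Lemma risingXD (c k : nat) :
  risingX c * (risingX k \Po ('X + c%:R%:P)) = risingX (c + k).
Proof.
rewrite risingX_comp_shift; elim: k => [|k IH].
  by rewrite [X in _ * X]big_geq // mulr1 addn0.
by rewrite [X in _ * X]big_nat_recr //= mulrA IH addnS /risingX [in RHS]big_nat_recr.
Qed.

(* The q^i-coefficient of sum_k q^k P_k(D), acting on eps-polynomials. *)
Definition applyOp_eps (n : nat) (P : nat -> {poly F}) (t : nat -> {poly F})
    (i : nat) : {poly F} :=
  \sum_(k < n.+1)
    (if (k <= i)%N then t (i - k)%N * (P k \Po ('X + (i - k)%:R%:P)) else 0).

Lemma applyOp_eps_Ptilde n P t i :
  applyOp_eps n (Ptilde P) (fun i => t i * risingX i) i =
  risingX i * applyOp_eps n P t i.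
Proof.
rewrite /applyOp_eps mulr_sumr; apply: eq_bigr => k _.
case: ifP => [le_ki|]; last by rewrite mulr0.
have -> : risingX i = risingX (i - k) * (risingX k \Po ('X + (i - k)%:R%:P)).
  by rewrite risingXD subnK.
rewrite /Ptilde -/(risingX k) comp_polyM; ring.
Qed.

Hypothesis charF0 : [pchar F] =i pred0.

Variables (N : nat) (J : ser F) (t : nat -> {poly F}).
Hypothesis J_coef : forall i j, (j <= N)%N -> J i j = (t i)`_j.

Lemma iter_Dop_Jr r l i m : (r <= N)%N ->
  iter l (@Dop F) (Jr J r) i m =
  if (m <= r)%N then (t i * ('X + i%:R%:P) ^+ l)`_(r - m) / (m`!)%:R else 0.
Proof.
move=> le_rN; elim: l i m => [|l IH] i m.
  rewrite /= expr0 mulr1 /Jr; case: ifP => // _.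
  by rewrite J_coef // (leq_trans (leq_subr _ _) le_rN).
rewrite iterS {1}/Dop !IH; case: (leqP m r) => [le_mr|lt_rm]; last first.
  by rewrite ltnNge ltnW // !mulr0 addr0.
set c := t i * _ ^+ l.
have -> : t i * ('X + i%:R%:P) ^+ l.+1 = 'X * c + i%:R%:P * c.
  by rewrite /c exprS mulrCA mulrDl.
rewrite coefD coefXM coefCM; case: (ltnP m r) => [lt_mr|le_rm]; last first.
  have -> : m = r by apply/eqP; rewrite eqn_leq le_mr le_rm.
  by rewrite subnn /= mulr0 addr0 add0r mulrA.
have fact_neq0 k : (k`!%:R : F) != 0.
  by move/pcharf0P: charF0 => ->; rewrite -lt0n fact_gt0.
have succ_neq0 : (m.+1%:R : F) != 0 by move/pcharf0P: charF0 => ->.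
rewrite subn_eq0 leqNgt lt_mr /= factS natrM -subnS.
by field; rewrite fact_neq0 nat1r succ_neq0.
Qed.

Lemma applyOp_Jr n P r i m : (r <= N)%N ->
  applyOp n P (Jr J r) i m =
  if (m <= r)%N then (applyOp_eps n P t i)`_(r - m) / (m`!)%:R else 0.
Proof.
move=> le_rN; rewrite /applyOp /qmul /polyD /applyOp_eps.
case: ifP => le_mr.
  rewrite coef_sum mulr_suml; apply: eq_bigr => k _.
  case: ifP => _; last by rewrite coef0 mul0r.
  rewrite comp_polyE mulr_sumr coef_sum mulr_suml; apply: eq_bigr => l _.
  by rewrite iter_Dop_Jr // le_mr -scalerAr coefZ mulrA.
apply: big1 => k _; case: ifP => // _.
by apply: big1 => l _; rewrite iter_Dop_Jr // le_mr mulr0.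
Qed.

Lemma perturbed_solP n P :
  perturbed_sol N n P J <->
  forall i j, (j <= N)%N -> (applyOp_eps n P t i)`_j = 0.
Proof.
split=> [sol i j le_jN | eps_sol r le_rN i m].
  by have := sol j le_jN i 0%N; rewrite applyOp_Jr // subn0 fact0 divr1.
rewrite applyOp_Jr //; case: ifP => // _.
by rewrite eps_sol ?mul0r // (leq_trans (leq_subr _ _) le_rN).
Qed.

End PerturbedSolutions.

Theorem corollary2p2p5 (F : fieldType) (hF : [pchar F] =i pred0)
  (n : nat) (P : nat -> {poly F}) (N : nat) (a : ser F) :
  perturbed_sol N n P a -> perturbed_sol N n (Ptilde P) (Itilde N a).
Proof.
pose t i := \sum_(j < N.+1) a i j *: 'X^j.
have a_coef i j : (j <= N)%N -> a i j = (t i)`_j.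
  by move=> le_jN; rewrite /t -poly_def coef_poly ltnS le_jN.
have Itilde_coef i j : (j <= N)%N -> Itilde N a i j = (t i * risingX F i)`_j.
  by move=> le_jN; rewrite /Itilde le_jN.
move/(perturbed_solP hF a_coef) => sol.
apply/(perturbed_solP hF Itilde_coef) => i.
by rewrite applyOp_eps_Ptilde; apply: coef_mul_eq0; apply: sol.
Qed.
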